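(* Let $M=(Q,\mathcal{A},\Delta,I,F)$ be a complete symbolic finite automaton. Let $n=|Q|$, $m=|\Delta|$, $k$ the size of the largest predicate used in $\Delta$, $m_q$ the number of transitions of $\Delta$ leaving $q$ for each $q\in Q$, and $\hat m=\max\{m_q\mid q\in Q\}$. Then the algorithm LocalSim described in the context computes $\preceq_M$ in time $$O\Big(n\sum_{q\in Q} m_q 2^{m_q} + m\,\mathcal{C}_{sat}(\hat m,k)\sum_{q\in Q}2^{m_q}\Big).$$
   Context: An effective Boolean algebra is $\mathcal{A}=(\mathfrak{D},\mathbb{P},[\![\cdot]\!],\vee,\wedge,\neg)$ where $\mathbb{P}$ is a set of predicates closed under $\vee,\wedge,\neg$, with an interpretation $[\![\cdot]\!]:\mathbb{P}\to 2^{\mathfrak{D}}$ mapping $\vee,\wedge,\neg$ to union, intersection and complement w.r.t. $\mathfrak{D}$; $\mathit{IsSat}(\varphi)$ means $[\![\varphi]\!]\neq\emptyset$, and the operations and $\mathit{IsSat}$ are computable. Predicates have a measurable size; $\mathcal{C}_{sat}(x,y)$ denotes the worst-case complexity of constructing a predicate obtained by applying $x$ operations of $\mathcal{A}$ to predicates of size at most $y$ and checking its satisfiability. An SFA is $M=(Q,\mathcal{A},\Delta,I,F)$ with finite state set $Q$, finite transition relation $\Delta\subseteq Q\times\mathbb{P}\times Q$ whose predicates are satisfiable, initial states $I$, final states $F$; its concrete transitions are $[\![\Delta]\!]=\{(q,a,p)\mid (q,\psi,p)\in\Delta, a\in[\![\psi]\!]\}$. $M$ is complete if for every $q\in Q$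 and $a\in\mathfrak{D}$ there is $p$ with $(q,a,p)\in[\![\Delta]\!]$. A relation $S\subseteq Q\times Q$ is a simulation on $M$ if whenever $(p,r)\in S$: $p\in F$ implies $r\in F$, and for all $a\in\mathfrak{D}$ and $(p,a,p')\in[\![\Delta]\!]$ there is $(r,a,r')\in[\![\Delta]\!]$ with $(p',r')\in S$; $\preceq_M$ is the unique maximal simulation. The minterms $\mathrm{Minterms}(\Phi)$ of a finite set $\Phi$ of predicates are the satisfiable predicates among $\{\bigwedge_{\phi\in\Phi'}\phi\wedge\bigwedge_{\phi\in\Phi\setminus\Phi'}\neg\phi\mid\Phi'\subseteq\Phi\}$. For $p\in Q$ let $\mathbb{P}_{\Delta,p}$ be the set of predicates on transitions of $\Delta$ leaving $p$. The locally mintermised form $\Delta_L$ of $\Delta$ is obtained by replacing each $(p,\varphi,q)\in\Delta$ by $\{(p,\omega,q)\mid\omega\in\mathrm{Minterms}(\mathbb{P}_{\Delta,p}),\ \mathit{IsSat}(\omega\wedge\varphi)\}$. Algorithm LocalSim (input: a complete SFA $M$): 1. Compute $\Delta_L$. 2. For all $p,q\in Q$ and every transition $(q,\psi,t)\in\Delta_L$, set a counter $N_\psi(q,p):=|\{r\mid (q,\psi,r)\in\Delta_L\}|$. 3. Set $\mathit{Sim}:=Q\times Q$ and $\mathit{NotSim}:=F\times(Q\setminus F)$. 4. While $\mathit{NotSim}\neq\emptyset$: remove some $(i,j)$ from $\mathit{NotSim}$ and from $\mathit{Sim}$; for every transition $(t,\psi_{tj},j)\in\Delta_L$: decrement $N_{\psi_{tj}}(t,i)$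 by one, and if it becomes $0$, then for every transition $(s,\varphi_{si},i)\in\Delta$ with $(s,t)\in\mathit{Sim}$, if $\mathit{IsSat}(\psi_{tj}\wedge\varphi_{si})$ then add $(s,t)$ to $\mathit{NotSim}$. 5. Return $\mathit{Sim}$. *)

From Stdlib Require List.
From HB Require Import structures.
From mathcomp Require Import all_boot.

Set Implicit Arguments.
Unset Strict Implicit.
Unset Printing Implicit Defensive.

Record EBA := MkEBA {
  dom : Type;
  prd : Type;
  interp : prd -> dom -> Prop;
  por : prd -> prd -> prd;
  pand : prd -> prd -> prd;
  pneg : prd -> prd;
  interp_or : forall a b x, interp (por a b) x <-> interp a x \/ interp b x;
  interp_and : forall a b x, interp (pand a b) x <-> interp a x /\ interp b x;
  interp_neg : forall a x, interp (pneg a) x <-> ~ interp a x;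
  issat : prd -> bool;
  issatP : forall a, issat a <-> exists x, interp a x;
  psize : prd -> nat;
  (* csat x y : worst-case cost of constructing a predicate obtained by      *)
  (* applying (at most) x operations to predicates of size at most y and     *)
  (* checking its satisfiability.  Being a worst case over "at most",        *)
  (* it is monotone.                                                         *)
  csat : nat -> nat -> nat;
  csat_mono : forall x x' y y', x <= x' -> y <= y' -> csat x y <= csat x' y'
}.

Record SFA (A : EBA) := MkSFA {
  st : finType;
  delta : seq (st * prd A * st);
  init : {set st};
  final : {set st};
  delta_sat : forall t, List.In t delta -> issat t.1.2
}.

Inductive bterm (P : Type) :=
| BBase of P
| BAnd of bterm P & bterm P
| BNot of bterm P.

Fixpoint beval (A : EBA) (t : bterm (prd A)) : prd A :=
  match t with
  | BBase p => p
  | BAnd a b => @pand A (beval a) (beval b)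
  | BNot a => @pneg A (beval a)
  end.

Fixpoint bops (P : Type) (t : bterm P) : nat :=
  match t with
  | BBase _ => 0
  | BAnd a b => (bops a + bops b).+1
  | BNot a => bops a
  end.

Fixpoint bsize (A : EBA) (t : bterm (prd A)) : nat :=
  match t with
  | BBase p => @psize A p
  | BAnd a b => maxn (bsize a) (bsize b)
  | BNot a => bsize a
  end.

Definition ccost (A : EBA) (t : bterm (prd A)) : nat := @csat A (bops t) (bsize t).

Fixpoint signvecs (n : nat) : seq (seq bool) :=
  if n is n'.+1 then [seq b :: v | b <- [:: true; false], v <- signvecs n']
  else [:: [::]].

Definition lit (P : Type) (b : bool) (p : P) : bterm P :=
  if b then BBase p else BNot (BBase p).

Fixpoint conj_list (P : Type) (x : bterm P) (s : seq (bterm P)) : bterm P :=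
  match s with
  | [::] => x
  | y :: s' => BAnd x (conj_list y s')
  end.

Definition minterm (P : Type) (ps : seq P) (b : seq bool) : option (bterm P) :=
  match zip b ps with
  | [::] => None
  | (b0, p0) :: r => Some (conj_list (lit b0 p0) [seq lit x.1 x.2 | x <- r])
  end.

Section Algo.
Variable A : EBA.
Variable M : SFA A.
Local Notation Q := (st M).
Local Notation Delta := (delta M).

Definition trans := (Q * prd A * Q)%type.
Definition src (t : trans) : Q := t.1.1.
Definition lab (t : trans) : prd A := t.1.2.
Definition tgt (t : trans) : Q := t.2.

Definition ctrans (q : Q) (a : dom A) (p : Q) : Prop :=
  exists t, List.In t Delta /\ src t = q /\ tgt t = p /\ @interp A (lab t) a.

Definition complete : Prop := forall (q : Q) (a : dom A), exists p, ctrans q a p.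

Definition is_simulation (S : Q -> Q -> Prop) : Prop :=
  forall p r, S p r ->
    (p \in final M -> r \in final M) /\
    (forall a p', ctrans p a p' -> exists r', ctrans r a r' /\ S p' r').

Definition maxsim (p r : Q) : Prop := exists S, is_simulation S /\ S p r.

Definition outs (p : Q) : seq trans := [seq t <- Delta | src t == p].
Definition mq (p : Q) : nat := size (outs p).
Definition mhat : nat := \max_(q : Q) mq q.
Definition ksize : nat := \max_(t <- Delta) @psize A (lab t).

Definition bound : nat :=
  #|Q| * (\sum_(q : Q) mq q * 2 ^ mq q)
  + size Delta * @csat A mhat ksize * (\sum_(q : Q) 2 ^ mq q).

(* an entry (p, omega, q) of Delta_L; omega is identified by its sign vector *)
Record lentry := LE { le_src : Q; le_sig : seq bool;
                      le_term : bterm (prd A); le_tgt : Q }.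

Definition step1_at (p : Q) : seq lentry * nat :=
  let os := outs p in
  let ps := map lab os in
  let vs := signvecs (size ps) in
  let cands := pmap (fun b => omap (fun w => (b, w)) (minterm ps b)) vs in
  let mts := [seq bw <- cands | @issat A (beval bw.2)] in
  let pairs := [seq (t, bw) | t <- os, bw <- mts] in
  let chk (x : trans * (seq bool * bterm (prd A))) := BAnd x.2.2 (BBase (lab x.1)) in
  let ents := [seq LE p x.2.1 x.2.2 (tgt x.1)
              | x <- [seq x <- pairs | @issat A (beval (chk x))]] in
  (ents, size Delta                               (* selecting outs p  *)
         + size ps * size vs                      (* generating candidates *)
         + \sum_(bw <- cands) (1 + ccost bw.2)     (* IsSat of candidates *)
         + \sum_(x <- pairs) (1 + ccost (chk x))). (* IsSat(omega /\ phi) *)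

Definition DL : seq lentry := flatten [seq (step1_at p).1 | p <- enum Q].
Definition cost1 : nat := \sum_(p <- enum Q) (step1_at p).2.

Definition ctr := Q -> seq bool -> Q -> nat.
Definition upd (N : ctr) (t : Q) (b : seq bool) (i : Q) (v : nat) : ctr :=
  fun t' b' i' => if [&& t' == t, b' == b & i' == i] then v else N t' b' i'.

Definition N0 : ctr :=
  foldl (fun N (x : lentry * Q) =>
           upd N (le_src x.1) (le_sig x.1) x.2 (N (le_src x.1) (le_sig x.1) x.2).+1)
        (fun _ _ _ => 0) [seq (e, p) | e <- DL, p <- enum Q].
Definition cost2 : nat := size DL * #|Q|.

Definition predL (j : Q) : seq lentry := [seq e <- DL | le_tgt e == j].
Definition predD (i : Q) : seq trans := [seq t <- Delta | tgt t == i].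
Definition cost_pred : nat := #|Q| * size DL + #|Q| * size Delta.

Definition Sim0 : {set Q * Q} := setT.
Definition NotSim0 : {set Q * Q} :=
  [set x | (x.1 \in final M) && (x.2 \notin final M)].
Definition cost3 : nat := #|Q| * #|Q| + #|Q| * #|Q|.

Record lstate := LS { ls_sim : {set Q * Q}; ls_notsim : {set Q * Q}; ls_ctr : ctr }.

Definition init_state : lstate := LS Sim0 NotSim0 N0.
Definition pre_cost : nat := cost1 + cost2 + cost_pred + cost3.

Definition scan_preds (S : {set Q * Q}) (i t : Q) (w : bterm (prd A))
    (NS : {set Q * Q}) : {set Q * Q} * nat :=
  foldl (fun (acc : {set Q * Q} * nat) (d : trans) =>
           if (src d, t) \in S then
             let chk := BAnd w (BBase (lab d)) in
             ((if @issat A (beval chk) then (src d, t) |: acc.1 else acc.1),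
              acc.2 + 1 + ccost chk)
           else (acc.1, acc.2 + 1))
        (NS, 0) (predD i).

Definition body (i j : Q) (s : lstate) : lstate * nat :=
  let S := ls_sim s :\ (i, j) in
  foldl (fun (acc : lstate * nat) (e : lentry) =>
           let N := ls_ctr acc.1 in
           let v := (N (le_src e) (le_sig e) i).-1 in
           let N' := upd N (le_src e) (le_sig e) i v in
           if v == 0 then
             let r := scan_preds S i (le_src e) (le_term e) (ls_notsim acc.1) in
             (LS S r.1 N', acc.2 + 1 + r.2)
           else (LS S (ls_notsim acc.1) N', acc.2 + 1))
        (LS S (ls_notsim s :\ (i, j)) (ls_ctr s), 1) (predL j).

(* executions of the while loop, "remove SOME (i,j)": any choice *)
Inductive lrun : lstate -> nat -> lstate -> Prop :=
| lrun_nil s : lrun s 0 s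
| lrun_cons s i j s' c c' s'' :
    (i, j) \in ls_notsim s -> body i j s = (s', c) -> lrun s' c' s'' ->
    lrun s (c + c') s''.

End Algo.

(* LocalSim refines Q x Q with counters: N_psi(t, i) counts the psi-successors r of t
   in Delta_L with (i, r) still in Sim.  Invariant: pairs out of Sim, or queued in
   NotSim, are not in the maximal simulation; every other pair (x, y) of Sim respects
   F, and for every transition of x and every local minterm psi of y meeting its label
   the counter N_psi(y, .) at its target is positive.  Because the local minterms of y
   cover the alphabet and a satisfiable minterm meeting a label lies inside it, Sim is
   a simulation once NotSim is empty.
   For the running time, a potential assigns 1 + |pre_L(j)| to each pair (i, j) of Sim,
   and to each positive counter N_psi(q, i) the cost of one scan of the Delta-predecessors
   of i, each test costing C_sat(mhat, k).  There are at most sum_q 2^(m_q) local minterms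
   and at most sum_q m_q 2^(m_q) transitions in Delta_L. *)

From Pilot Require Import Defs.
From HB Require Import structures.
From mathcomp Require Import all_boot zify.
From Stdlib Require Import Classical.

Set Implicit Arguments.
Unset Strict Implicit.
Unset Printing Implicit Defensive.

(* Predicates and predicate terms have no decidable equality, so membership in
   sequences is List.In rather than \in. *)
Lemma In_filter (T : Type) (p : pred T) s x :
  List.In x (filter p s) <-> List.In x s /\ p x.
Proof.
elim: s => [|y s IH] /=; first by split=> // -[].
case Hy: (p y) => /=; rewrite IH; split.
- by case=> [<-|[]]; [split; [left|]|split; [right|]].
- by case=> [[->|H] Hx]; [left|right].
- by case=> H1 H2; split; [right|].
- by case=> [[<-|H] Hx]; [rewrite Hy in Hx|].
Qed.

Lemma In_map (T U : Type) (f : T -> U) s y :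
  List.In y (map f s) <-> exists x, List.In x s /\ y = f x.
Proof.
elim: s => [|x s IH] /=; first by split=> // -[x []].
rewrite IH; split.
- by case=> [<-|[z [Hz ->]]]; [exists x; split; [left|]|exists z; split; [right|]].
- by case=> z [[<-|Hz] ->]; [left|right; exists z].
Qed.

Lemma In_cat (T : Type) (s1 s2 : seq T) x :
  List.In x (s1 ++ s2) <-> List.In x s1 \/ List.In x s2.
Proof. by split; [apply: List.in_app_or|apply: List.in_or_app]. Qed.

Lemma In_flatten (T : Type) (ss : seq (seq T)) x :
  List.In x (flatten ss) <-> exists s, List.In s ss /\ List.In x s.
Proof.
elim: ss => [|s ss IH] /=; first by split=> // -[s []].
rewrite In_cat IH; split.
- by case=> [H|[s' [H1 H2]]]; [exists s; split; [left|]|exists s'; split; [right|]].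
- by case=> s' [[<-|H1] H2]; [left|right; exists s'].
Qed.

Lemma In_allpairs (T U V : Type) (f : T -> U -> V) (s : seq T) (t : T -> seq U) z :
  List.In z [seq f x y | x <- s, y <- t x] <->
  exists x y, List.In x s /\ List.In y (t x) /\ z = f x y.
Proof.
rewrite In_flatten; split.
- by case=> l [/In_map [x [Hx ->]] /In_map [y [Hy ->]]]; exists x, y.
- case=> x [y [Hx [Hy ->]]]; exists [seq f x y | y <- t x].
  by split; apply/In_map; [exists x|exists y].
Qed.

Lemma In_pmap (T U : Type) (f : T -> option U) s y :
  List.In y (pmap f s) <-> exists x, List.In x s /\ f x = Some y.
Proof.
elim: s => [|x s IH] /=; first by split=> // -[x []].
case Hf: (f x) => [u|] /=; rewrite IH; split.
- by case=> [<-|[z [Hz Hz']]]; [exists x; split; [left|]|exists z; split; [right|]].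
- by case=> z [[<-|Hz] Hz']; [left; rewrite Hf in Hz'; case: Hz'|right; exists z].
- by case=> z [Hz Hz']; exists z; split; [right|].
- by case=> z [[<-|Hz] Hz']; [rewrite Hf in Hz'|exists z].
Qed.

Lemma In_zip_snd (T U : Type) (s : seq T) (t : seq U) x : List.In x (zip s t) -> List.In x.2 t.
Proof.
by elim: s t => [|a s IH] [|b t] //= [<-|H]; [left|right; apply: IH].
Qed.

Lemma In_zip_snd_lift (T U : Type) (s : seq T) (t : seq U) y :
  size s = size t -> List.In y t -> exists a, List.In (a, y) (zip s t).
Proof.
elim: s t => [|a s IH] [|b t] //= [Hs] [<-|H]; first by exists a; left.
by case: (IH t Hs H) => c Hc; exists c; right.
Qed.

Lemma count_posP (T : Type) (p : pred T) s : 0 < count p s <-> exists x, List.In x s /\ p x.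
Proof.
elim: s => [|y s IH] /=; first by split=> // -[x []].
case Hy: (p y) => /=; split => //.
- by exists y; split; [left|].
- by case/IH => x [Hx Hpx]; exists x; split; [right|].
- by case=> x [[<-|Hx] Hpx]; [rewrite Hy in Hpx|apply/IH; exists x].
Qed.

Lemma count_eq0_In (T : Type) (p : pred T) s x : count p s = 0 -> List.In x s -> p x = false.
Proof.
move=> H0 Hx; apply/negbTE/negP => Hp.
by have := proj2 (count_posP p s) (ex_intro _ x (conj Hx Hp)); rewrite H0.
Qed.

Lemma leq_sum_In (T : Type) (r : seq T) (F : T -> nat) c :
  (forall x, List.In x r -> F x <= c) -> \sum_(x <- r) F x <= size r * c.
Proof.
elim: r => [|x r IH] H; first by rewrite big_nil.
rewrite big_cons mulSn leq_add //; first by apply: H; left.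
by apply: IH => y Hy; apply: H; right.
Qed.

Lemma leq_sum_drop (T : Type) (r : seq T) (F G : T -> nat) x0 c :
  List.In x0 r -> (forall x, G x <= F x) -> G x0 + c <= F x0 ->
  \sum_(x <- r) G x + c <= \sum_(x <- r) F x.
Proof.
move=> Hx0 HGF H0; elim: r Hx0 => [|x r IH] //=; rewrite !big_cons => -[->|Hx0].
- by rewrite addnAC leq_add // leq_sum.
- by rewrite -addnA leq_add // IH.
Qed.

Lemma In_mem (T : eqType) (s : seq T) x : x \in s -> List.In x s.
Proof.
by elim: s => [|y s IH] //=; rewrite in_cons => /orP [/eqP ->|/IH]; [left|right].
Qed.

Lemma sum_count_fibres (X : Type) (T : finType) (f : X -> T) (s : seq X) :
  \sum_(q : T) count (fun x => f x == q) s = size s.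
Proof.
rewrite -sum1_size (partition_big f predT) //.
by apply: eq_bigr => q _; rewrite sum1_count.
Qed.

Lemma exp2_mul_leq (a b : nat) : 2 ^ a * b <= a * 2 ^ a + b * 2 ^ b.
Proof.
case: (leqP b a) => H.
- by apply: leq_trans (leq_addr _ _); rewrite mulnC leq_mul2r H orbT.
- apply: leq_trans (leq_addl _ _); rewrite mulnC leq_mul2l.
  by rewrite leq_exp2l // ltnW // orbT.
Qed.

Lemma size_signvecs n : size (signvecs n) = 2 ^ n.
Proof.
elim: n => [|n IH] //=.
by rewrite cats0 size_cat !size_map IH expnS mul2n -addnn.
Qed.

Lemma In_signvecs n b : List.In b (signvecs n) <-> size b = n.
Proof.
elim: n b => [|n IH] b; first by case: b => [|? ?]; split=> //; [left|case].
change (List.In b [seq x :: v | x <- [:: true; false], v <- signvecs n] <-> size b = n.+1).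
rewrite In_allpairs; split.
- by case=> x [v [_ [/IH Hv ->]]] /=; rewrite Hv.
- case: b => // x v [/IH Hv]; exists x, v; split=> //.
  by case: x; [left|right; left].
Qed.

Section Minterms.
Variable A : EBA.
Implicit Types (ps : seq (prd A)) (b : seq bool) (w : bterm (prd A)).

Lemma bops_conj_lits (x : bterm (prd A)) (r : seq (bool * prd A)) :
  bops (conj_list x [seq lit y.1 y.2 | y <- r]) = bops x + size r.
Proof.
elim: r x => [|y r IH] x /=; first by rewrite addn0.
by rewrite IH addnS; case: y.1.
Qed.

Lemma minterm_bops ps b w : minterm ps b = Some w -> bops w < size ps.
Proof.
rewrite /minterm; have := size_zip b ps.
case: (zip b ps) => [|[b0 p0] r] //= Hs [<-].
rewrite bops_conj_lits.
have -> : bops (lit b0 p0) = 0 by case: b0.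
by rewrite add0n -ltnS Hs ltnS geq_minr.
Qed.

Lemma bsize_conj_list (x : bterm (prd A)) s k :
  bsize x <= k -> (forall y, List.In y s -> bsize y <= k) -> bsize (conj_list x s) <= k.
Proof.
elim: s x => [|y s IH] x //= Hx Hs.
rewrite geq_max Hx IH //; first by apply: Hs; left.
by move=> z Hz; apply: Hs; right.
Qed.

Lemma bsize_lit bl (p : prd A) : bsize (lit bl p) = psize p.
Proof. by case: bl. Qed.

Lemma minterm_bsize ps b w k : minterm ps b = Some w ->
  (forall p, List.In p ps -> psize p <= k) -> bsize w <= k.
Proof.
rewrite /minterm; have := @In_zip_snd _ _ b ps.
case: (zip b ps) => [|[b0 p0] r] //= Hz [<-] Hk.
apply: bsize_conj_list => [|y /In_map [z [Hzr ->]]]; rewrite bsize_lit; apply: Hk.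
- by apply: (Hz (b0, p0)); left.
- by apply: Hz; right.
Qed.

Lemma interp_lit bl (p : prd A) a :
  interp (beval (lit bl p)) a <-> (interp p a <-> bl = true).
Proof.
case: bl => /=; first by split=> [H|[_ H]]; [split|apply: H].
rewrite interp_neg; split=> [H|[H _] /H //].
by split=> // /H.
Qed.

Lemma interp_conj_list (x : bterm (prd A)) s a :
  interp (beval (conj_list x s)) a <->
  interp (beval x) a /\ List.Forall (fun y => interp (beval y) a) s.
Proof.
elim: s x => [|y s IH] x /=; first by split=> [H|[]//]; split.
rewrite interp_and IH; split.
- by case=> H1 [H2 H3]; split=> //; constructor.
- by case=> H1 H2; inversion H2; split.
Qed.

Lemma interp_minterm ps b w a : minterm ps b = Some w ->
  interp (beval w) a <->
  List.Forall (fun x => interp x.2 a <-> x.1 = true) (zip b ps).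
Proof.
rewrite /minterm; case: (zip b ps) => [|[b0 p0] r] //= [<-].
rewrite interp_conj_list interp_lit -/(List.Forall _ r).
have -> : List.Forall (fun y => interp (beval y) a) [seq lit x.1 x.2 | x <- r] <->
          List.Forall (fun x => interp x.2 a <-> x.1 = true) r.
  rewrite !List.Forall_forall; split=> H x Hx.
  - by apply/interp_lit/H/In_map; exists x.
  - by case/In_map: Hx => y [Hy ->]; apply/interp_lit/H.
by split=> [[H1 H2]|H]; [constructor|inversion H].
Qed.

Lemma minterm_subset ps b w p :
  size b = size ps -> minterm ps b = Some w -> List.In p ps ->
  issat (@pand A (beval w) p) -> forall a, interp (beval w) a -> interp p a.
Proof.
move=> Hs Hm Hp /issatP [a0 /interp_and [Hw0 Hp0]] a Hw.
have [bit Hin] := In_zip_snd_lift Hs Hp.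
move/(interp_minterm a0 Hm)/List.Forall_forall/(_ _ Hin): Hw0 => /= H0.
move/(interp_minterm a Hm)/List.Forall_forall/(_ _ Hin): Hw => /= H.
exact/H/H0.
Qed.

Lemma minterm_cover ps a : ps <> [::] ->
  exists b w, [/\ size b = size ps, minterm ps b = Some w & interp (beval w) a].
Proof.
have [b [Hs Hf]] : exists b, size b = size ps /\
    List.Forall (fun x => interp x.2 a <-> x.1 = true) (zip b ps).
  elim: ps => [|p ps [b [Hs Hf]]]; first by exists [::].
  case: (classic (interp p a)) => H.
  - by exists (true :: b); split; [rewrite /= Hs|constructor].
  - by exists (false :: b); split; [rewrite /= Hs|constructor].
case: ps Hs Hf => [//|p ps] Hs Hf _; case: b Hs Hf => [//|b0 b] Hs Hf.
exists (b0 :: b), (conj_list (lit b0 p) [seq lit x.1 x.2 | x <- zip b ps]).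
by split=> //; apply/(@interp_minterm (p :: ps) (b0 :: b)).
Qed.

End Minterms.

Section LocalSim.
Variables (A : EBA) (M : SFA A).
Local Notation Q := (st M).
Local Notation Delta := (delta M).
Local Notation DL := (DL M).
Local Notation sat t := (@issat A (beval t)).

Definition labs (p : Q) : seq (prd A) := map (@lab A M) (outs p).
Definition cands (p : Q) : seq (seq bool * bterm (prd A)) :=
  pmap (fun b => omap (fun w => (b, w)) (minterm (labs p) b)) (signvecs (size (labs p))).
Definition mints (p : Q) := [seq bw <- cands p | sat bw.2].
Definition lpairs (p : Q) := [seq (t, bw) | t <- outs p, bw <- mints p].
Definition lcheck (x : trans M * (seq bool * bterm (prd A))) := BAnd x.2.2 (BBase (lab x.1)).
Definition lentries (p : Q) :=
  [seq LE p x.2.1 x.2.2 (tgt x.1) | x <- [seq x <- lpairs p | sat (lcheck x)]].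

Lemma step1_atE p : step1_at p =
  (lentries p, size Delta + size (labs p) * size (signvecs (size (labs p)))
               + \sum_(bw <- cands p) (1 + ccost bw.2)
               + \sum_(x <- lpairs p) (1 + ccost (lcheck x))).
Proof. by []. Qed.

Definition Ksat : nat := @csat A (mhat M) (ksize M).

Definition keys : seq (Q * seq bool) :=
  flatten [seq [seq (p, bw.1) | bw <- cands p] | p <- enum Q].

Lemma size_labs p : size (labs p) = mq p.
Proof. by rewrite size_map. Qed.

Lemma In_outs d p : List.In d (outs p) <-> List.In d Delta /\ src d = p.
Proof. by rewrite In_filter; split=> -[H1 /eqP H2]. Qed.

Lemma In_predD d i : List.In d (Defs.predD i) <-> List.In d Delta /\ tgt d = i.
Proof. by rewrite In_filter; split=> -[H1 /eqP H2]. Qed.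

Lemma In_enum (p : Q) : List.In p (enum Q).
Proof. by apply: In_mem; rewrite mem_enum. Qed.

Lemma In_cands p bw : List.In bw (cands p) <->
  size bw.1 = mq p /\ minterm (labs p) bw.1 = Some bw.2.
Proof.
rewrite In_pmap; split.
- case=> b [/In_signvecs Hb]; case E: (minterm (labs p) b) => [w|] //= [<-].
  by rewrite -size_labs.
- case: bw => b w /= [Hb Hm]; exists b.
  by split; [apply/In_signvecs; rewrite size_labs|rewrite Hm].
Qed.

Lemma In_DL e : List.In e DL <->
  exists p d bw, [/\ List.In d (outs p), List.In bw (cands p), sat bw.2,
                     sat (BAnd bw.2 (BBase (lab d))) & e = LE p bw.1 bw.2 (tgt d)].
Proof.
rewrite In_flatten; split.
- case=> l [/In_map [p [_ ->]]] /In_map [x [/In_filter [Hx Hs] ->]].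
  case/In_allpairs: Hx Hs => d [bw [Hd [/In_filter [Hbw Hbs] ->]]] Hs.
  by exists p, d, bw.
- case=> p [d [bw [Hd Hbw Hbs Hs ->]]]; exists (step1_at p).1.
  split; first by apply/In_map; exists p; split=> //; apply: In_enum.
  apply/In_map; exists (d, bw); split=> //; apply/In_filter; split=> //.
  by apply/In_allpairs; exists d, bw; split=> //; split=> //; apply/In_filter.
Qed.

Lemma psize_ksize d : List.In d Delta -> psize (lab d) <= ksize M.
Proof.
rewrite /ksize; elim: Delta => [|t l IH] //= [<-|H]; rewrite big_cons.
- exact: leq_maxl.
- exact: leq_trans (IH H) (leq_maxr _ _).
Qed.

Lemma mq_mhat (p : Q) : mq p <= mhat M.
Proof. exact: (leq_bigmax p). Qed.

Lemma cand_bounds p bw : List.In bw (cands p) ->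
  bops bw.2 < mhat M /\ bsize bw.2 <= ksize M.
Proof.
case/In_cands => _ Hm; split.
- by apply: leq_trans (mq_mhat p); rewrite -size_labs; apply: minterm_bops Hm.
- apply: (minterm_bsize Hm) => q /In_map [d [/In_outs [Hd _] ->]].
  exact: psize_ksize.
Qed.

Lemma ccost_cand p (bw : seq bool * bterm (prd A)) :
  List.In bw (cands p) -> ccost bw.2 <= Ksat.
Proof. by case/cand_bounds => Hb Hs; apply: csat_mono => //; apply: ltnW. Qed.

Lemma ccost_check (w : bterm (prd A)) (q : prd A) :
  bops w < mhat M -> bsize w <= ksize M -> psize q <= ksize M ->
  ccost (BAnd w (BBase q)) <= Ksat.
Proof. by move=> Hb Hw Hq; apply: csat_mono; rewrite /= ?addn0 ?geq_max ?Hw. Qed.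

Lemma DL_entry_props e : List.In e DL ->
  [/\ List.In (le_sig e, le_term e) (cands (le_src e)),
      List.In (le_src e, le_sig e) keys &
      exists2 d, List.In d (outs (le_src e)) &
        tgt d = le_tgt e /\ sat (BAnd (le_term e) (BBase (lab d)))].
Proof.
case/In_DL => p [d [[b w] [Hd Hc _ Hs ->]]] /=; split=> //; last by exists d.
rewrite /keys In_flatten; exists [seq (p, bw.1) | bw <- cands p]; split.
- by apply/In_map; exists p; split=> //; apply: In_enum.
- by apply/In_map; exists (b, w).
Qed.

Lemma DL_term_uniq e e' : List.In e DL -> List.In e' DL ->
  le_src e = le_src e' -> le_sig e = le_sig e' -> le_term e = le_term e'.
Proof.
case/DL_entry_props => /In_cands [_ H] _ _ /DL_entry_props [/In_cands [_ H'] _ _] E1 E2.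
by move: H; rewrite E1 E2 H' => -[].
Qed.

Lemma DL_ctrans e a : List.In e DL -> interp (beval (le_term e)) a ->
  ctrans (le_src e) a (le_tgt e).
Proof.
case/DL_entry_props => /In_cands [Hsz Hm] _ [d /In_outs [Hd Hsd] [Htd Hs]] Ha.
exists d; split=> //; split=> //; split=> //.
apply: (minterm_subset _ Hm _ Hs) Ha; first by rewrite size_labs.
by apply/In_map; exists d; split=> //; apply/In_outs.
Qed.

Lemma DL_cover y a : complete M -> exists2 e, List.In e DL &
  le_src e = y /\ interp (beval (le_term e)) a.
Proof.
move=> Hcomp; case: (Hcomp y a) => y0 [d0 [Hd0 [Hsd0 [_ Ha0]]]].
have Hd0y : List.In d0 (outs y) by apply/In_outs.
have Hne : labs y <> [::].
  move=> H0; have : List.In (lab d0) (labs y) by apply/In_map; exists d0.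
  by rewrite H0.
have [b [w [Hsb Hm Hw]]] := minterm_cover a Hne.
exists (LE y b w (tgt d0)) => //; apply/In_DL; exists y, d0, (b, w).
split=> //; first by apply/In_cands; rewrite -size_labs.
- by apply/issatP; exists a.
- by apply/issatP; exists a; apply/interp_and.
Qed.

Definition nlive (S : {set Q * Q}) (t : Q) (b : seq bool) (x : Q) : nat :=
  count (fun e => [&& t == le_src e, b == le_sig e & (x, le_tgt e) \in S]) DL.

Definition npending (l : seq (lentry M)) (t : Q) (b : seq bool) : nat :=
  count (fun e => (t == le_src e) && (b == le_sig e)) l.

Lemma foldl_upd_succ (l : seq (lentry M * Q)) (N : ctr M) t b i :
  foldl (fun N (x : lentry M * Q) =>
           upd N (le_src x.1) (le_sig x.1) x.2 (N (le_src x.1) (le_sig x.1) x.2).+1) N l t b i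
  = N t b i + count (fun x => [&& t == le_src x.1, b == le_sig x.1 & i == x.2]) l.
Proof.
elim: l N => [|x l IH] N /=; first by rewrite addn0.
rewrite IH /upd; case: ifP => // /and3P [/eqP -> /eqP -> /eqP ->].
by rewrite add1n addnS.
Qed.

Lemma N0E t b i : N0 t b i = npending DL t b.
Proof.
rewrite /N0 foldl_upd_succ add0n /npending; elim: DL => [|e l IH] //=.
rewrite count_cat IH count_map; congr (_ + _).
under eq_count => p do rewrite /= andbA (eq_sym i).
case: (_ && _) => /=; last by elim: (enum Q).
by have := count_uniq_mem i (enum_uniq Q); rewrite mem_enum.
Qed.

Definition scan_step (S : {set Q * Q}) (t : Q) (w : bterm (prd A))
    (acc : {set Q * Q} * nat) (d : trans M) : {set Q * Q} * nat :=
  if (src d, t) \in S then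
    let chk := BAnd w (BBase (lab d)) in
    ((if sat chk then (src d, t) |: acc.1 else acc.1), acc.2 + 1 + ccost chk)
  else (acc.1, acc.2 + 1).

Lemma scan_predsE S i t w NS :
  scan_preds S i t w NS = foldl (scan_step S t w) (NS, 0) (Defs.predD i).
Proof. by []. Qed.

Lemma mem_scan_fold S t w l acc x :
  x \in (foldl (scan_step S t w) acc l).1 <->
  x \in acc.1 \/ exists d, [/\ List.In d l, x = (src d, t), x \in S &
                            sat (BAnd w (BBase (lab d)))].
Proof.
elim: l acc => [|d l IH] acc /=; first by split=> [H|[//|[d [[]]]]]; left.
rewrite IH /scan_step.
have Hl P : P \/ (exists d', [/\ List.In d' l, x = (src d', t), x \in S &
                                 sat (BAnd w (BBase (lab d')))]) ->
  P \/ exists d', [/\ List.In d' (d :: l), x = (src d', t), x \in S &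
                      sat (BAnd w (BBase (lab d')))].
  by case=> [HP|[d' [H1 H2 H3 H4]]]; [left|right; exists d'; split=> //; right].
case: ifP => HS; [case: ifP => Hs|]; split=> /=; try exact: Hl.
- rewrite in_setU1 => -[/orP [/eqP ->|H]|H]; last exact: (Hl _ (or_intror H)).
  + by right; exists d; split=> //; left.
  + by left.
- by case=> [H|[d' [[<-|H1] -> H3 H4]]];
    [left; rewrite in_setU1 H orbT|left; rewrite in_setU1 eqxx|right; exists d'].
- by case=> [H|[d' [[<-|H1] -> H3 H4]]]; [left|rewrite /= Hs in H4|right; exists d'].
- by case=> [H|[d' [[<-|H1] -> H3 H4]]]; [left|rewrite H3 in HS|right; exists d'].
Qed.

Lemma scan_fold_cost S t w l NS c :
  (forall d, List.In d l -> List.In d Delta) -> bops w < mhat M -> bsize w <= ksize M ->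
  (foldl (scan_step S t w) (NS, c) l).2 <= c + size l * Ksat.+1.
Proof.
move=> Hl Hb Hw; elim: l NS c Hl => [|d l IH] NS c Hl /=; first by rewrite addn0.
have Hd : psize (lab d) <= ksize M by apply/psize_ksize/Hl; left.
rewrite [scan_step _ _ _ _ d]/scan_step /=; case: ifP => _;
  (apply: leq_trans (IH _ _ (fun d' H => Hl d' (or_intror H))) _);
  have := ccost_check Hb Hw Hd; rewrite mulSn; lia.
Qed.

Definition matched (N : ctr M) (x y : Q) : Prop :=
  (x \in final M -> y \in final M) /\
  forall d e, List.In d Delta -> src d = x -> List.In e DL -> le_src e = y ->
    sat (BAnd (le_term e) (BBase (lab d))) -> 0 < N y (le_sig e) (tgt d).

Definition sim_inv (S NS : {set Q * Q}) (N : ctr M) : Prop :=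
  [/\ NS \subset S,
      forall x y, (x, y) \in NS \/ (x, y) \notin S -> ~ maxsim x y &
      forall x y, (x, y) \in S -> (x, y) \notin NS -> matched N x y].

Definition state_inv (s : lstate M) : Prop :=
  sim_inv (ls_sim s) (ls_notsim s) (ls_ctr s) /\
  forall t b x, ls_ctr s t b x = nlive (ls_sim s) t b x.

(* Inside the iteration removing (i, j), the counters of column i have not
   yet been decremented for the entries l of Delta_L still to be visited. *)
Definition loop_inv (i : Q) (S : {set Q * Q}) (l : seq (lentry M)) (s : lstate M) :=
  [/\ ls_sim s = S, sim_inv S (ls_notsim s) (ls_ctr s) &
      forall t b x, ls_ctr s t b x = nlive S t b x + (x == i) * npending l t b].

Definition scan_cost (x : Q) : nat := size (Defs.predD x) * Ksat.+1.

Definition budget (N : ctr M) : nat :=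
  \sum_(k <- keys) \sum_(x <- enum Q) (0 < N k.1 k.2 x) * scan_cost x.

Definition potential (s : lstate M) : nat :=
  \sum_(x in ls_sim s) (size (predL x.2)).+1 + budget (ls_ctr s).

Lemma budget_term_mono (N N' : ctr M) k x :
  (forall t b x, 0 < N' t b x -> 0 < N t b x) ->
  (0 < N' k.1 k.2 x) * scan_cost x <= (0 < N k.1 k.2 x) * scan_cost x.
Proof.
by move=> H; rewrite leq_mul2r; case: (posnP (N' k.1 k.2 x)) => [_|/H ->]; rewrite ?orbT.
Qed.

Lemma budget_mono (N N' : ctr M) :
  (forall t b x, 0 < N' t b x -> 0 < N t b x) -> budget N' <= budget N.
Proof.
by move=> H; apply: leq_sum => k _; apply: leq_sum => x _; apply: budget_term_mono.
Qed.

Lemma budget_drop (N N' : ctr M) t b i :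
  (forall t b x, 0 < N' t b x -> 0 < N t b x) -> 0 < N t b i -> N' t b i = 0 ->
  List.In (t, b) keys -> budget N' + scan_cost i <= budget N.
Proof.
move=> H Hi Hi' Hk; have Hterm := budget_term_mono _ _ H.
apply: (leq_sum_drop Hk) => [k|]; first by apply: leq_sum => x _.
by apply: (leq_sum_drop (In_enum i)) => [x|]; [apply: (Hterm (t, b))|rewrite Hi Hi' /= mul1n].
Qed.

Lemma upd_pending N S i e l t b x :
  (forall t b x, N t b x = nlive S t b x + (x == i) * npending (e :: l) t b) ->
  upd N (le_src e) (le_sig e) i (N (le_src e) (le_sig e) i).-1 t b x
    = nlive S t b x + (x == i) * npending l t b.
Proof.
move=> HN; rewrite /upd; case: ifP => [/and3P [/eqP -> /eqP -> /eqP ->]|H].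
- by rewrite HN /npending /= !eqxx /= !mul1n add1n addnS.
- rewrite HN /npending /=; case: (x =P i) => [Ex|] //=.
  by move: H; rewrite Ex eqxx andbT => ->.
Qed.

Lemma upd_pred_pos (N : ctr M) t0 b0 i t b x :
  0 < upd N t0 b0 i (N t0 b0 i).-1 t b x -> 0 < N t b x.
Proof.
by rewrite /upd; case: ifP => // /and3P [/eqP -> /eqP -> /eqP ->]; case: (N _ _ _).
Qed.

Lemma matched_upd N t0 b0 i v x y :
  matched N x y ->
  (forall d e, List.In d Delta -> src d = x -> List.In e DL -> le_src e = y ->
     y = t0 -> le_sig e = b0 -> tgt d = i ->
     sat (BAnd (le_term e) (BBase (lab d))) -> 0 < v) ->
  matched (upd N t0 b0 i v) x y.
Proof.
move=> [Hf Hm] Hv; split=> // d e Hd Hsd He Hse Hs; rewrite /upd.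
case: ifP => [/and3P [/eqP E1 /eqP E2 /eqP E3]|_]; last exact: Hm.
exact: Hv Hs.
Qed.

Lemma maxsim_dead_counter (S : {set Q * Q}) (e : lentry M) (d : trans M) :
  (forall x y, (x, y) \notin S -> ~ maxsim x y) ->
  List.In e DL -> nlive S (le_src e) (le_sig e) (tgt d) = 0 ->
  List.In d Delta -> sat (BAnd (le_term e) (BBase (lab d))) ->
  ~ maxsim (src d) (le_src e).
Proof.
move=> Hsound He Hdead Hd /issatP [a /interp_and [Hae Had]] [R [HR HRde]].
have [r' [[d' [Hd' [Hsd' [Htd' Had']]]] HRr']] :=
  proj2 (HR _ _ HRde) a (tgt d) (ex_intro _ d (conj Hd (conj erefl (conj erefl Had)))).
have [Hc _ _] := DL_entry_props He.
have He' : List.In (LE (le_src e) (le_sig e) (le_term e) (tgt d')) DL.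
  apply/In_DL; exists (le_src e), d', (le_sig e, le_term e).
  split=> //; first by apply/In_outs.
  - by apply/issatP; exists a.
  - by apply/issatP; exists a; apply/interp_and.
have := count_eq0_In Hdead He'; rewrite /= !eqxx Htd' /= => /negbT Hr'.
by apply: (Hsound _ _ Hr'); exists R.
Qed.

Definition body_step (i : Q) (S : {set Q * Q}) (acc : lstate M * nat) (e : lentry M) :=
  let N := ls_ctr acc.1 in
  let v := (N (le_src e) (le_sig e) i).-1 in
  let N' := upd N (le_src e) (le_sig e) i v in
  if v == 0 then
    let r := scan_preds S i (le_src e) (le_term e) (ls_notsim acc.1) in
    (LS S r.1 N', acc.2 + 1 + r.2)
  else (LS S (ls_notsim acc.1) N', acc.2 + 1).

Lemma bodyE i j s : body i j s =
  foldl (body_step i (ls_sim s :\ (i, j)))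
        (LS (ls_sim s :\ (i, j)) (ls_notsim s :\ (i, j)) (ls_ctr s), 1) (predL j).
Proof. by []. Qed.

Lemma sim_inv_scan S NS N e i v :
  sim_inv S NS N -> List.In e DL -> nlive S (le_src e) (le_sig e) i = 0 ->
  sim_inv S (scan_preds S i (le_src e) (le_term e) NS).1 (upd N (le_src e) (le_sig e) i v).
Proof.
move=> [HNS Hsound Hmatch] He Hdead.
have Hr x := mem_scan_fold S (le_src e) (le_term e) (Defs.predD i) (NS, 0) x.
rewrite -scan_predsE in Hr; split.
- by apply/subsetP => x /Hr [/(subsetP HNS)|[d [_ -> ? _]]].
- move=> x y [/Hr [Hxy|[d [/In_predD [Hd Htd] [-> ->] _ Hs]]]|Hxy].
  + by apply: Hsound; left.
  + apply: (maxsim_dead_counter (S := S) _ He _ Hd Hs); last by rewrite Htd.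
    by move=> ? ? H; apply: Hsound; right.
  + by apply: Hsound; right.
- move=> x y HS Hnr; have HnNS : (x, y) \notin NS by apply: contra Hnr => H; apply/Hr; left.
  apply: matched_upd (Hmatch x y HS HnNS) _ => d e' Hd Hsd He' Hse' Ey Eb Etd Hs.
  case/negP: Hnr; apply/Hr; right; exists d; split=> //; first by apply/In_predD.
  - by rewrite Hsd -Ey.
  - by rewrite -(DL_term_uniq He' He) // Hse' Ey.
Qed.

Lemma body_step_spec i S e l st c :
  List.In e DL -> loop_inv i S (e :: l) st ->
  loop_inv i S l (body_step i S (st, c) e).1 /\
  (body_step i S (st, c) e).2 + budget (ls_ctr (body_step i S (st, c) e).1)
    <= c + 1 + budget (ls_ctr st).
Proof.
move=> He [Hsim HI Hctr].
have [Hc Hkey _] := DL_entry_props He; have [Hb Hw] := cand_bounds Hc.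
rewrite /body_step /=; set N := ls_ctr st; set t0 := le_src e; set b0 := le_sig e.
set N' := upd N t0 b0 i (N t0 b0 i).-1.
have HN' t b x : N' t b x = nlive S t b x + (x == i) * npending l t b.
  exact: upd_pending.
have Hpos t b x : 0 < N' t b x -> 0 < N t b x by move/upd_pred_pos.
case: eqP => Hv; last first.
  split; last by have := budget_mono Hpos; rewrite /= -/N'; lia.
  case: HI => HNS Hsound Hmatch; split=> //; split=> // x y HS HnNS.
  by apply: matched_upd (Hmatch x y HS HnNS) _ => *; rewrite lt0n; apply/eqP.
have Hdead : nlive S t0 b0 i = 0.
  by have := HN' t0 b0 i; rewrite /N' /upd !eqxx /= Hv mul1n; lia.
split; first by split=> //; apply: sim_inv_scan.
have HDi d : List.In d (Defs.predD i) -> List.In d Delta by case/In_predD.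
have := scan_fold_cost S t0 (ls_notsim st) 0 HDi Hb Hw; rewrite -scan_predsE /= add0n.
have HN0 : 0 < N t0 b0 i by rewrite /N Hctr /npending /= !eqxx mul1n addnS.
have HN'0 : N' t0 b0 i = 0 by rewrite /N' /upd !eqxx.
move=> Hscan; rewrite -addnA leq_add2l addnC.
exact: leq_trans (leq_add (leqnn _) Hscan) (budget_drop Hpos HN0 HN'0 Hkey).
Qed.

Lemma body_loop_spec i S l st c :
  (forall e, List.In e l -> List.In e DL) -> loop_inv i S l st ->
  let: (st', c') := foldl (body_step i S) (st, c) l in
  loop_inv i S [::] st' /\ c' + budget (ls_ctr st') <= c + size l + budget (ls_ctr st).
Proof.
elim: l st c => [|e l IH] st c Hl HI /=; first by rewrite addn0.
have [HI' Hc'] := body_step_spec c (Hl e (or_introl erefl)) HI.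
case: (body_step i S (st, c) e) HI' Hc' => st' c' /= HI' Hc'.
have := IH st' c' (fun e' H => Hl e' (or_intror H)) HI'.
case: (foldl _ _ _) => st'' c'' [HI'' Hc'']; split=> //; lia.
Qed.

Lemma nlive_setD1 (S : {set Q * Q}) i j t b x : (i, j) \in S ->
  nlive S t b x = nlive (S :\ (i, j)) t b x + (x == i) * npending (predL j) t b.
Proof.
move=> Hij; rewrite /nlive /npending /predL count_filter.
elim: DL => [|e L IH] /=; first by rewrite muln0.
rewrite IH mulnDr addnACA; congr (_ + _).
rewrite in_setD1 xpair_eqE.
case: (x =P i) => [->|_]; case: (le_tgt e =P j) => [->|_] /=;
  rewrite ?Hij ?andbT ?andbF ?muln0 ?mul1n ?addn0 //.
Qed.

Lemma body_spec i j s : state_inv s -> (i, j) \in ls_notsim s ->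
  state_inv (body i j s).1 /\ (body i j s).2 + potential (body i j s).1 <= potential s.
Proof.
move=> [[HNS Hsound Hmatch] Hctr] Hij.
have HijS : (i, j) \in ls_sim s by apply: (subsetP HNS).
set S := ls_sim s :\ (i, j).
have HL : loop_inv i S (predL j) (LS S (ls_notsim s :\ (i, j)) (ls_ctr s)).
  split=> //=; last by move=> t b x; rewrite Hctr; apply: nlive_setD1.
  split; first exact: setSD.
  - move=> x y [H|H]; apply: Hsound.
    + by left; move: H; rewrite in_setD1 => /andP [].
    + by move: H; rewrite in_setD1 negb_and negbK => /orP [/eqP [-> ->]|H]; [left|right].
  - by move=> x y; rewrite !in_setD1 => /andP [-> HS] /= HnNS; apply: Hmatch.
have Hl e : List.In e (predL j) -> List.In e DL by case/In_filter.
rewrite bodyE; have := body_loop_spec 1 Hl HL.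
case: (foldl _ _ _) => st c [[Hsim HG Hc] Hcost]; split.
- split; first by rewrite Hsim.
  by move=> t b x; rewrite Hc /npending /= muln0 addn0 Hsim.
- move: Hcost; rewrite /potential Hsim (big_setD1 (i, j) HijS) /= -/S.
  set Z := \sum_(x in S) _; lia.
Qed.

Lemma run_spec s c s' : lrun s c s' -> state_inv s ->
  state_inv s' /\ c + potential s' <= potential s.
Proof.
elim=> [s0|s0 i j s1 c1 c2 s2 Hin Hb _ IH] HI; first by split.
have := body_spec HI Hin; rewrite Hb /= => -[/IH [HI2 H2] H1]; split=> //; lia.
Qed.

Lemma init_state_inv : state_inv (init_state M).
Proof.
split; last by move=> t b x; rewrite /= N0E; apply: eq_count => e; rewrite in_setT andbT.
split; first exact: subsetT.
- move=> x y [|]; rewrite ?inE // => /andP [Hx Hy] [R [HR HRxy]].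
  by move: (proj1 (HR _ _ HRxy) Hx); rewrite (negbTE Hy).
- move=> x y _; rewrite inE negb_and negbK => Hn; split.
  + by move=> Hx; move: Hn; rewrite Hx.
  + move=> d e Hd Hsd He Hse Hs; rewrite /= N0E.
    by apply/count_posP; exists e; rewrite Hse !eqxx.
Qed.

Lemma sim_is_simulation s : complete M -> state_inv s -> ls_notsim s = set0 ->
  is_simulation (fun p r => (p, r) \in ls_sim s).
Proof.
move=> Hcomp [[_ _ Hmatch] Hctr] E x y Hxy.
have Hn : (x, y) \notin ls_notsim s by rewrite E in_set0.
have [Hf Hm] := Hmatch x y Hxy Hn; split=> // a x' [d [Hd [Hsd [Htd Ha]]]].
have [e He [Hse Hea]] := DL_cover y a Hcomp.
have Hs : sat (BAnd (le_term e) (BBase (lab d))).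
  by apply/issatP; exists a; apply/interp_and.
move: (Hm d e Hd Hsd He Hse Hs); rewrite Hctr.
move=> /count_posP [e' [He' /and3P [/eqP E1 /eqP E2 HS]]].
exists (le_tgt e'); split; last by rewrite -Htd.
rewrite E1; apply: DL_ctrans => //.
by rewrite -(DL_term_uniq He He') // Hse.
Qed.

Lemma final_sim_maxsim s : complete M -> state_inv s -> ls_notsim s = set0 ->
  forall p r, (p, r) \in ls_sim s <-> maxsim p r.
Proof.
move=> Hcomp HI E p r; split=> [Hpr|Hm].
- by exists (fun p r => (p, r) \in ls_sim s); split=> //; apply: sim_is_simulation.
- case: HI => [[_ Hsound _] _]; apply/negPn/negP => Hn.
  exact: Hsound p r (or_intror Hn) Hm.
Qed.

Definition nlocal : nat := \sum_(q : Q) mq q * 2 ^ mq q.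
Definition nminterms : nat := \sum_(q : Q) 2 ^ mq q.

Lemma boundE : bound M = #|Q| * nlocal + size Delta * Ksat * nminterms.
Proof. by []. Qed.

Lemma size_Delta : size Delta = \sum_(q : Q) mq q.
Proof.
rewrite -(sum_count_fibres (@src A M)).
by apply: eq_bigr => q _; rewrite /mq /outs size_filter.
Qed.

Lemma mq_size_Delta (q : Q) : mq q <= size Delta.
Proof. by rewrite /mq /outs size_filter count_size. Qed.

Lemma size_cands p : size (cands p) <= 2 ^ mq p.
Proof.
by rewrite size_pmap; apply: leq_trans (count_size _ _) _; rewrite size_signvecs size_labs.
Qed.

Lemma size_cands_mq p : size (cands p) <= mq p * 2 ^ mq p.
Proof.
case E: (mq p) => [|k]; last by rewrite -E (leq_trans (size_cands p)) // leq_pmull // E.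
by rewrite /cands; have /size0nil -> : size (labs p) = 0 by rewrite size_labs.
Qed.

Lemma size_lpairs p : size (lpairs p) <= mq p * 2 ^ mq p.
Proof.
rewrite size_allpairs leq_mul2l /mints size_filter; apply/orP; right.
exact: leq_trans (count_size _ _) (size_cands p).
Qed.

Lemma big_enum_Q (f : Q -> nat) : \sum_(p <- enum Q) f p = \sum_(p : Q) f p.
Proof. by rewrite big_enum; apply: eq_bigl => p; rewrite inE. Qed.

Lemma size_flatten_enum (T : Type) (f : Q -> seq T) :
  size (flatten [seq f p | p <- enum Q]) = \sum_(p : Q) size (f p).
Proof. by rewrite size_flatten /shape -map_comp sumnE big_map big_enum_Q. Qed.

Lemma size_DL : size DL <= nlocal.
Proof.
rewrite size_flatten_enum; apply: leq_sum => p _.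
by rewrite size_map size_filter (leq_trans (count_size _ _) (size_lpairs p)).
Qed.

Lemma size_keys : size keys <= nminterms.
Proof.
rewrite size_flatten_enum; apply: leq_sum => p _.
by rewrite size_map size_cands.
Qed.

Lemma cost1_at_bound (p : Q) : (step1_at p).2 <=
  size Delta + 3 * (mq p * 2 ^ mq p) + 2 * (size Delta * Ksat * 2 ^ mq p).
Proof.
rewrite step1_atE /= size_signvecs size_labs.
have Hcands : \sum_(bw <- cands p) (1 + ccost bw.2) <= mq p * 2 ^ mq p * Ksat.+1.
  apply: leq_trans (leq_sum_In (c := Ksat.+1) _) _ => [bw /ccost_cand|].
    by rewrite add1n.
  by rewrite leq_mul2r size_cands_mq orbT.
have Hpairs : \sum_(x <- lpairs p) (1 + ccost (lcheck x)) <= mq p * 2 ^ mq p * Ksat.+1.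
  apply: leq_trans (leq_sum_In (c := Ksat.+1) _) _; last by rewrite leq_mul2r size_lpairs orbT.
  move=> x /In_allpairs [d [bw [/In_outs [Hd _] [/In_filter [Hc _] ->]]]].
  have [Hb Hw] := cand_bounds Hc.
  by rewrite add1n ltnS; apply: ccost_check => //; apply: psize_ksize.
have HK : mq p * 2 ^ mq p * Ksat <= size Delta * Ksat * 2 ^ mq p.
  by rewrite mulnAC leq_mul2r leq_mul2r mq_size_Delta !orbT.
move: Hcands Hpairs HK; rewrite !mulnS.
set a := mq p * 2 ^ mq p; set X := a * Ksat; set Y := size Delta * Ksat * 2 ^ mq p; lia.
Qed.

Lemma cost1_bound :
  cost1 M <= #|Q| * size Delta + 3 * nlocal + 2 * (size Delta * Ksat * nminterms).
Proof.
rewrite /cost1 big_enum_Q.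
apply: (@leq_trans (\sum_(p : Q) (size Delta + 3 * (mq p * 2 ^ mq p)
                                  + 2 * (size Delta * Ksat * 2 ^ mq p)))).
  by apply: leq_sum => p _; apply: cost1_at_bound.
have E3 : \sum_(p : Q) 3 * (mq p * 2 ^ mq p) = 3 * nlocal by rewrite big_distrr.
have E2 : \sum_(p : Q) 2 * (size Delta * Ksat * 2 ^ mq p)
           = 2 * (size Delta * Ksat * nminterms).
  by rewrite /nminterms !big_distrr.
by rewrite big_split big_split E3 E2 sum_nat_const.
Qed.

Lemma sum_size_predD : \sum_(x : Q) size (Defs.predD x) = size Delta.
Proof.
by rewrite -(sum_count_fibres (@tgt A M)); apply: eq_bigr => x _; rewrite size_filter.
Qed.

Lemma sum_size_predL : \sum_(x : Q) size (predL x) = size DL.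
Proof.
by rewrite -(sum_count_fibres (@le_tgt A M)); apply: eq_bigr => x _; rewrite size_filter.
Qed.

Lemma budget_N0 : budget (@N0 A M) <= size keys * (size Delta * Ksat.+1).
Proof.
apply: leq_sum_In => k _; rewrite big_enum_Q -sum_size_predD big_distrl.
by apply: leq_sum => x _; rewrite -[X in _ <= X]mul1n leq_mul2r leq_b1 orbT.
Qed.

Lemma potential_init :
  potential (init_state M) <= #|Q| * (#|Q| + size DL) + size keys * (size Delta * Ksat.+1).
Proof.
rewrite /potential; apply: leq_add; last exact: budget_N0.
rewrite /= /Sim0.
rewrite (eq_bigl (fun x : Q * Q => predT x.1 && predT x.2)); last by move=> x; rewrite in_setT.
rewrite -(pair_big predT predT (fun _ j => (size (predL j)).+1)) /= sum_nat_const.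
rewrite (eq_bigr (fun j => size (predL j) + 1)) => [|j _]; last by rewrite addn1.
by rewrite big_split /= sum_nat_const sum_size_predL muln1 addnC.
Qed.

Lemma card_le_size_Delta : inhabited (dom A) -> complete M -> #|Q| <= size Delta.
Proof.
move=> [a] Hcomp; rewrite size_Delta -sum1_card; apply: leq_sum => q _.
have [p [d [Hd [Hsd _]]]] := Hcomp q a.
by rewrite /mq /outs size_filter; apply/count_posP; exists d; rewrite /= Hsd.
Qed.

Lemma size_Delta_le_nlocal : size Delta <= nlocal.
Proof. by rewrite size_Delta; apply: leq_sum => q _; rewrite leq_pmulr // expn_gt0. Qed.

Lemma nlocal_le_card_mul : nlocal <= #|Q| * nlocal.
Proof.
have -> : #|Q| * nlocal = \sum_(q : Q) nlocal by rewrite sum_nat_const.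
by apply: leq_sum => q _; rewrite [X in _ <= X](bigD1 q) //= leq_addr.
Qed.

(* The unit cost of each of the m * \sum_q 2^(m_q) satisfiability tests is
   absorbed by the first term of the bound. *)
Lemma size_Delta_mul_nminterms : size Delta * nminterms <= 2 * (#|Q| * nlocal).
Proof.
rewrite {1}size_Delta big_distrl /=.
apply: (@leq_trans (\sum_(q : Q) \sum_(t : Q) (mq t * 2 ^ mq t + mq q * 2 ^ mq q))).
  apply: leq_sum => q _; rewrite big_distrr; apply: leq_sum => t _.
  by rewrite [X in X <= _]mulnC exp2_mul_leq.
rewrite exchange_big /=; under eq_bigr do rewrite big_split /= sum_nat_const.
by rewrite big_split /= -big_distrr /= sum_nat_const mul2n -addnn.
Qed.

Lemma pre_cost_potential_bound : inhabited (dom A) -> complete M ->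
  pre_cost M + potential (init_state M) <= 13 * bound M.
Proof.
move=> Hinh Hcomp; rewrite boundE /pre_cost /cost2 /cost_pred /cost3.
have := cost1_bound; have := potential_init; have := size_Delta_mul_nminterms.
have := nlocal_le_card_mul; have HDL := size_DL; have Hkeys := size_keys.
have Hnm := card_le_size_Delta Hinh Hcomp; have HmT := size_Delta_le_nlocal.
set n := #|Q|; set m := size Delta; set K := Ksat; set T1 := nlocal; set T2 := nminterms.
have HnT : n * n <= n * T1 by rewrite leq_mul2l (leq_trans Hnm HmT) orbT.
have HmnT : n * m <= n * T1 by rewrite leq_mul2l HmT orbT.
have HDLT : n * size DL <= n * T1 by rewrite leq_mul2l HDL orbT.
have HkT := leq_mul (leqnn (m * K.+1)) Hkeys.
lia.
Qed.

End LocalSim.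

Theorem lemma4 :
  exists c : nat, forall (A : EBA) (M : SFA A),
    inhabited (dom A) -> complete M ->
    (* every execution of LocalSim runs within c * bound *)
    (forall (s : lstate M) (c' : nat),
        lrun (init_state M) c' s -> pre_cost M + c' <= c * bound M) /\
    (* and, when the while loop stops, Sim is the maximal simulation *)
    (forall (s : lstate M) (c' : nat),
        lrun (init_state M) c' s -> ls_notsim s = set0 ->
        forall p r, (p, r) \in ls_sim s <-> maxsim p r).
Proof.
exists 13 => A M Hinh Hcomp; split=> s c' /run_spec/(_ (init_state_inv M)) [HI Hc].
- by have := pre_cost_potential_bound Hinh Hcomp; lia.
- exact: final_sim_maxsim.
Qed.
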